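(* Suppose that both of the following hold: (i) for all positive integers $k,a$ such that neither $a$ nor $a+1$ is divisible by $k$, the Cayley digraph $\mathrm{Cay}(\mathbb{Z}_k;a,a+1)$ has two arc-disjoint hamiltonian paths; and (ii) for all positive integers $k,a$ such that $k$ is divisible by $2a+1$ and neither $a$ nor $a+1$ is divisible by $k$, the Cayley digraph $\mathrm{Cay}(\mathbb{Z}_k;-a,a+1)$ has two arc-disjoint hamiltonian paths. Then for every finite abelian group $G$ and every $2$-element generating set $\{a,b\}$ of $G$ with $a$ and $b$ nontrivial, $\mathrm{Cay}(G;a,b)$ has two arc-disjoint hamiltonian paths.
   Context: For an abelian group $G$ and $a,b\in G$, the Cayley digraph $\mathrm{Cay}(G;a,b)$ has vertex set $G$ and an arc from $v$ to $v+s$ for every $v\in G$ and $s\in\{a,b\}$. A hamiltonian path is a directed path visiting every vertex exactly once; arc-disjoint means sharing no arc. *)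

From HB Require Import structures.
From mathcomp Require Import all_boot all_order all_algebra.
Set Implicit Arguments. Unset Strict Implicit. Unset Printing Implicit Defensive.
Import GRing.Theory.
Local Open Scope ring_scope.

(* Cayley digraph Cay(G; a, b) on a finite abelian (additive) group G.
   Arcs are labelled by the generator used: the arc (v, c) goes from v to
   v + a if c = false and to v + b if c = true. *)
Definition cay_step (G : zmodType) (a b : G) (v : G) (c : bool) : G :=
  v + (if c then b else a).

Definition walk_verts (G : zmodType) (a b : G) (v : G) (cs : seq bool) : seq G :=
  v :: scanl (cay_step a b) v cs.

Definition walk_arcs (G : zmodType) (a b : G) (v : G) (cs : seq bool)
  : seq (G * bool) := zip (walk_verts a b v cs) cs.

Definition cay_ham_path (G : finZmodType) (a b : G) (v : G) (cs : seq bool)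
  : bool :=
  uniq (walk_verts a b v cs) && (size (walk_verts a b v cs) == #|G|)%N.

Definition two_arc_disjoint_ham_paths (G : finZmodType) (a b : G) : Prop :=
  exists (v1 : G) (cs1 : seq bool) (v2 : G) (cs2 : seq bool),
    [/\ cay_ham_path a b v1 cs1, cay_ham_path a b v2 cs2 &
        all (fun e => e \notin walk_arcs a b v2 cs2) (walk_arcs a b v1 cs1)].

Definition generates2 (G : zmodType) (a b : G) : Prop :=
  forall g : G, exists m n : int, g = a *~ m + b *~ n.

From mathcomp Require Import all_boot all_order all_algebra all_fingroup cyclic.
From mathcomp Require Import zify.
Set Implicit Arguments. Unset Strict Implicit. Unset Printing Implicit Defensive.
Import GRing.Theory FinRing.Theory.

(* Write c = b - a, let m be the order of c and n the least n > 0 with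
   a n in <c>, say a n = c l.  Every vertex is uniquely a i + c j with i < n
   and j in Z_m, so |G| = n m.  A hamiltonian path can snake through G in
   blocks of n vertices c j + a i, i = 0 .. n-1, taking n - 1 steps a or
   b = a + c inside a block.  As a n = c l, the first vertices c F(q) of
   consecutive blocks satisfy F(q+1) - F(q) in {K, K + 1}, where
   K = l + (number of b-steps inside a block): they trace a walk in
   Cay(Z_m; K, K + 1).  Two snakes whose blocks use complementary patterns
   of b-steps are arc-disjoint as soon as these row walks are (up to a
   shift), so everything reduces to Z_m.
   If n = 2 be + 1, both rows live in Cay(Z_m; l + be, l + be + 1), covered
   by hypothesis (i) unless m divides l + be or l + be + 1; then G is cyclic,
   generated by a + b, with {a, b} = {- be (a + b), (be + 1)(a + b)}, and
   hypothesis (ii) applies.  If n = 2 be, the rows live in Cay(Z_m; K, K + 1)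
   and Cay(Z_m; K - 1, K), and an explicit pair of walks runs through the
   cosets of <K> in opposite orders. *)

Lemma dvdn_modS d m : 0 < d -> (d %| m.+1) = (m %% d == d.-1).
Proof.
move=> d_gt0; rewrite {1}(divn_eq m d) -addnS dvdn_addr ?dvdn_mull //.
apply/idP/eqP=> [/(dvdn_leq (ltn0Sn _))|->]; last by rewrite prednK.
by have := ltn_pmod m d_gt0; lia.
Qed.

Lemma count_iotaS (P : pred nat) i :
  count P (iota 0 i.+1) = count P (iota 0 i) + P i.
Proof. by rewrite -addn1 iotaD count_cat /= addn0. Qed.

Lemma count_gtn_iota k N : count (gtn k) (iota 0 N) = minn k N.
Proof. by elim: N => [|N IHN]; rewrite ?minn0 // count_iotaS IHN /=; case: ltnP; lia. Qed.

Lemma zip_mkseqS (S T : Type) (f : nat -> S) (l : nat -> T) n :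
  zip (mkseq f n.+1) (mkseq l n) = [seq (f t, l t) | t <- iota 0 n].
Proof.
by rewrite mkseqS -cats1 -[mkseq l n]cats0 zip_cat ?size_mkseq //= cats0 zip_map.
Qed.

Section Walks.
Variables (G : finZmodType) (a b : G).

(* The vertices of a walk are [f 0], ..., [f (#|G| - 1)] and its arcs are
   labelled [l 0], ..., [l (#|G| - 2)]; other values are irrelevant. *)
Definition ham_walk (f : nat -> G) (l : nat -> bool) : Prop :=
  (forall t, t.+1 < #|G| -> f t.+1 = cay_step a b (f t) (l t)) /\
  {in gtn #|G| &, injective f}.

Definition arc_disjoint_walks (f : nat -> G) (lf : nat -> bool)
    (g : nat -> G) (lg : nat -> bool) : Prop :=
  forall t s, t.+1 < #|G| -> s.+1 < #|G| -> f t = g s -> lf t != lg s.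

Lemma scanl_cay_step_iota (f : nat -> G) (l : nat -> bool) n k :
  (forall t, k <= t < k + n -> f t.+1 = cay_step a b (f t) (l t)) ->
  scanl (cay_step a b) (f k) (map l (iota k n)) = map f (iota k.+1 n).
Proof.
elim: n k => [|n IHn] k step //=.
rewrite -step ?leqnn ?addnS ?ltnS ?leq_addr // IHn // => t /andP[kt tn].
by rewrite step // ltnW //= -addSnnS.
Qed.

Lemma walk_verts_mkseq (f : nat -> G) (l : nat -> bool) n :
  (forall t, t < n -> f t.+1 = cay_step a b (f t) (l t)) ->
  walk_verts a b (f 0) (mkseq l n) = mkseq f n.+1.
Proof. by move=> step; rewrite /walk_verts /mkseq scanl_cay_step_iota. Qed.

Lemma walk_verts_nthS v cs t : t < size cs ->
  nth v (walk_verts a b v cs) t.+1 =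
  cay_step a b (nth v (walk_verts a b v cs) t) (nth false cs t).
Proof.
move=> lt_t_cs; rewrite /walk_verts (nth_cons_scanl _ _ lt_t_cs).
by rewrite (nth_cons_scanl _ _ (ltnW lt_t_cs)) (take_nth false lt_t_cs) foldl_rcons.
Qed.

Lemma size_walk_verts v cs : size (walk_verts a b v cs) = (size cs).+1.
Proof. by rewrite /walk_verts /= size_scanl. Qed.

Lemma walk_arcsE v cs : walk_arcs a b v cs =
  [seq (nth v (walk_verts a b v cs) t, nth false cs t) | t <- iota 0 (size cs)].
Proof.
rewrite /walk_arcs; set w := walk_verts a b v cs.
by rewrite -{1}(mkseq_nth v w) -{1}(mkseq_nth false cs) size_walk_verts zip_mkseqS.
Qed.

Lemma card_finZmod_gt0 : 0 < #|G|.
Proof. by apply/card_gt0P; exists 0%R. Qed.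

Lemma walk_arcs_mkseq (f : nat -> G) (l : nat -> bool) n :
  (forall t, t < n -> f t.+1 = cay_step a b (f t) (l t)) ->
  walk_arcs a b (f 0) (mkseq l n) = [seq (f t, l t) | t <- iota 0 n].
Proof. by move=> step; rewrite /walk_arcs walk_verts_mkseq ?zip_mkseqS. Qed.

Lemma ham_walk_step f l t : ham_walk f l -> t < #|G|.-1 ->
  f t.+1 = cay_step a b (f t) (l t).
Proof. by case=> step _ lt_t; apply: step; rewrite -ltn_predRL. Qed.

Lemma ham_walk_path f l :
  ham_walk f l -> cay_ham_path a b (f 0) (mkseq l #|G|.-1).
Proof.
move=> walk; have [_ inj] := walk.
rewrite /cay_ham_path walk_verts_mkseq => [|t]; last exact: ham_walk_step.
by rewrite size_mkseq prednK ?card_finZmod_gt0 // eqxx andbT; apply/mkseq_uniqP.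
Qed.

Lemma ham_walk_nth v cs :
  uniq (walk_verts a b v cs) -> (size cs).+1 = #|G| ->
  ham_walk (nth v (walk_verts a b v cs)) (nth false cs).
Proof.
move=> uniq_w size_cs; split=> [t|]; first by rewrite -size_cs; exact: walk_verts_nthS.
by move/uniqP: uniq_w; rewrite size_walk_verts size_cs.
Qed.

Lemma two_arc_disjoint_ham_pathsP :
  two_arc_disjoint_ham_paths a b <->
  exists (f : nat -> G) (lf : nat -> bool) (g : nat -> G) (lg : nat -> bool),
    [/\ ham_walk f lf, ham_walk g lg & arc_disjoint_walks f lf g lg].
Proof.
split=> [|[f [lf [g [lg [walkf walkg disj]]]]]]; last first.
  exists (f 0), (mkseq lf #|G|.-1), (g 0), (mkseq lg #|G|.-1).
  split; [exact: ham_walk_path | exact: ham_walk_path |].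
  rewrite !walk_arcs_mkseq => [|t|t]; try exact: ham_walk_step.
  apply/allP=> _ /mapP[t lt_t ->]; apply/mapP=> -[s lt_s [eq_ts eq_l]].
  move: lt_t lt_s; rewrite !mem_iota /= !ltn_predRL => lt_t lt_s.
  by have := disj t s lt_t lt_s eq_ts; rewrite eq_l eqxx.
move=> [v1 [cs1 [v2 [cs2 [/andP[uniq1 /eqP size1] /andP[uniq2 /eqP size2]]]]]].
rewrite !walk_arcsE => /allP disj.
rewrite size_walk_verts in size1; rewrite size_walk_verts in size2.
exists (nth v1 (walk_verts a b v1 cs1)), (nth false cs1).
exists (nth v2 (walk_verts a b v2 cs2)), (nth false cs2).
split; [exact: ham_walk_nth | exact: ham_walk_nth |].
move=> t s; rewrite -{1}size1 -size2 !ltnS => lt_t lt_s eq_ts.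
apply/negP=> /eqP eq_l.
have /disj : (nth v1 (walk_verts a b v1 cs1) t, nth false cs1 t) \in
    [seq (nth v1 (walk_verts a b v1 cs1) t, nth false cs1 t) | t <- iota 0 (size cs1)].
  by apply: map_f; rewrite mem_iota.
by rewrite eq_ts eq_l map_f // mem_iota.
Qed.

End Walks.

Local Open Scope ring_scope.

Lemma arc_disjoint_walks_addr (G : finZmodType) f lf g lg (x : G) :
  arc_disjoint_walks f lf g lg ->
  arc_disjoint_walks (fun t => f t + x) lf (fun t => g t + x) lg.
Proof. by move=> disj t s lt_t lt_s /addIr; apply: disj. Qed.

Lemma two_arc_disjoint_ham_pathsC (G : finZmodType) (a b : G) :
  two_arc_disjoint_ham_paths a b -> two_arc_disjoint_ham_paths b a.
Proof.
have stepC v x : cay_step b a v (~~ x) = cay_step a b v x by case: x.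
move=> /two_arc_disjoint_ham_pathsP[f [lf [g [lg [[stepf injf] [stepg injg] disj]]]]].
apply/two_arc_disjoint_ham_pathsP.
exists f, (fun t => ~~ lf t), g, (fun t => ~~ lg t); split.
- by split=> // t lt_t; rewrite stepC stepf.
- by split=> // t lt_t; rewrite stepC stepg.
by move=> t s lt_t lt_s /(disj t s lt_t lt_s); rewrite (inj_eq negb_inj).
Qed.

Lemma two_arc_disjoint_ham_paths_morph (H G : finZmodType) (psi : H -> G) (x y : H) :
  {morph psi : u v / u + v} -> injective psi -> #|H| = #|G| ->
  two_arc_disjoint_ham_paths x y -> two_arc_disjoint_ham_paths (psi x) (psi y).
Proof.
move=> psiD inj_psi cardHG.
have walk_psi h lh : ham_walk x y h lh -> ham_walk (psi x) (psi y) (psi \o h) lh.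
  move=> [step inj]; split=> [t|t s]; rewrite -cardHG.
    by move=> lt_t; rewrite /= step // /cay_step psiD; case: (lh t).
  by move=> lt_t lt_s /inj_psi; apply: inj.
move=> /two_arc_disjoint_ham_pathsP[f [lf [g [lg [walkf walkg disj]]]]].
apply/two_arc_disjoint_ham_pathsP.
exists (psi \o f), lf, (psi \o g), lg; split; [exact: walk_psi | exact: walk_psi |].
by move=> t s; rewrite -cardHG => lt_t lt_s /inj_psi; apply: disj.
Qed.

Lemma card_Zmod m : (1 < m)%N -> #|'Z_m| = m.
Proof. by move=> m_gt1; rewrite card_ord Zp_cast. Qed.

Section CyclicEmbedding.
Variables (G : finZmodType) (x : G) (m : nat).
Hypothesis order_x : #[x]%g = m.

Lemma mulrn_modn k : x *+ (k %% m) = x *+ k.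
Proof. by rewrite -order_x -!zmodXgE expg_mod_order. Qed.

Lemma eqr_mulrn i j : (x *+ i == x *+ j) = (i == j %[mod m]).
Proof. by rewrite -order_x -!zmodXgE eq_expg_mod_order. Qed.

Hypothesis m_gt1 : (1 < m)%N.

Lemma Zp_mulrn_nat k : x *+ (k%:R : 'Z_m) = x *+ k.
Proof. by rewrite val_Zp_nat // mulrn_modn. Qed.

Lemma Zp_mulrnD : {morph (fun j : 'Z_m => x *+ j) : u v / u + v}.
Proof.
by move=> u v; rewrite -[u]natr_Zp -[v]natr_Zp -natrD !Zp_mulrn_nat mulrnDr.
Qed.

Lemma Zp_mulrnN : {morph (fun j : 'Z_m => x *+ j) : u / - u}.
Proof. by move=> u; apply/eqP; rewrite -addr_eq0 -Zp_mulrnD addNr mulr0n. Qed.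

Lemma Zp_mulrn_inj : injective (fun j : 'Z_m => x *+ j).
Proof.
move=> u v /eqP; rewrite eqr_mulrn !modn_small => [/eqP/val_inj //||];
  by rewrite -[m in (_ < m)%N](Zp_cast m_gt1).
Qed.

End CyclicEmbedding.

Lemma mulrz_nat (G : finZmodType) (x : G) (z : int) : exists k : nat, x *~ z = x *+ k.
Proof.
case: z => k; first by exists k.
exists ((#[x]%g).-1 * k.+1)%N; rewrite NegzE mulrNz; apply/eqP.
rewrite eq_sym -addr_eq0 -mulrnDr -mulSnr prednK ?order_gt0 //.
by rewrite mulrnA -[x *+ _]zmodXgE expg_order mul0rn.
Qed.

Lemma generates2_mulrn (G : finZmodType) (a b : G) : generates2 a b ->
  forall g, exists i j : nat, g = a *+ i + (b - a) *+ j.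
Proof.
move=> gen g; have [u [v ->]] := gen g.
have [i Ei] := mulrz_nat a (u + v); have [j Ej] := mulrz_nat (b - a) v.
by exists i, j; rewrite -Ei -Ej mulrzDr mulrzBl -addrA [a *~ v + _]addrC subrK.
Qed.

Section CosetCoordinates.
Variables (G : finZmodType) (a c : G).
Hypothesis gen : forall g, exists i j : nat, g = a *+ i + c *+ j.

Lemma cycle_coordinates :
  exists n l, [/\ (0 < n)%N, a *+ n = c *+ l, #|G| = (n * #[c]%g)%N &
    forall i i' j j', (i < n)%N -> (i' < n)%N ->
      a *+ i + c *+ j = a *+ i' + c *+ j' -> i = i'].
Proof.
have : exists n, (0 < n)%N && (a *+ n \in <[c]>%g).
  by exists #[a]%g; rewrite order_gt0 -zmodXgE expg_order group1.
case/ex_minnP=> n /andP[n_gt0 /cycleP[l]]; rewrite zmodXgE => anl n_min.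
have coord_uniq i i' j j' : (i < n)%N -> (i' < n)%N ->
    a *+ i + c *+ j = a *+ i' + c *+ j' -> i = i'.
  wlog le_ii' : i i' j j' / (i <= i')%N.
    move=> W lt_i lt_i' E; case: (leqP i i') => [le|/ltnW le]; first exact: (W i i' j j').
    by symmetry; apply: (W i' i j' j le lt_i' lt_i (esym E)).
  move=> _ lt_i' E; apply/eqP; rewrite eqn_leq le_ii' leqNgt -subn_gt0.
  apply/negP=> diff_gt0.
  have diff_mem : a *+ (i' - i) \in <[c]>%g.
    have -> : a *+ (i' - i) = c *+ j - c *+ j'.
      apply/eqP; rewrite eq_sym subr_eq; apply/eqP/(addrI (a *+ i)).
      by rewrite E addrA -mulrnDr subnKC.
    by rewrite -!zmodXgE -zmodVgE -zmodMgE groupM ?groupV ?mem_cycle.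
  have := n_min _ (introT andP (conj diff_gt0 diff_mem)).
  by rewrite leqNgt (leq_ltn_trans (leq_subr _ _) lt_i').
pose h (p : 'I_n * 'I_#[c]%g) := a *+ p.1 + c *+ p.2.
have inj_h : injective h.
  move=> [i j] [i' j']; rewrite /h /= => E.
  have Ei : i = i' by apply/val_inj/(coord_uniq _ _ _ _ (ltn_ord i) (ltn_ord i') E).
  move: E; rewrite Ei => /addrI/eqP; rewrite (eqr_mulrn (erefl #[c]%g)).
  by rewrite !modn_small // => /eqP/val_inj->.
exists n, l; split=> //.
have -> : (n * #[c]%g)%N = #|{: 'I_n * 'I_#[c]%g}| by rewrite card_prod !card_ord.
rewrite -(card_codom inj_h).
apply: eq_card=> g; apply/esym/codomP; have [i [j ->]] := gen g.
exists (Ordinal (ltn_pmod i n_gt0), Ordinal (ltn_pmod (l * (i %/ n) + j) (order_gt0 c))).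
rewrite /h /= (mulrn_modn (erefl #[c]%g)) {1}(divn_eq i n) mulrnDr.
by rewrite mulnC mulrnA anl -mulrnA mulrnDr addrA [c *+ _ + _]addrC.
Qed.

End CosetCoordinates.

Lemma eqr_natr_Zp m x y : (1 < m)%N -> ((x%:R : 'Z_m) == y%:R) = (x == y %[mod m])%N.
Proof. by move=> m_gt1; rewrite -val_eqE /= !val_Zp_nat. Qed.

Lemma eqn_modMr_gcd m K i j : (1 < m)%N ->
  (i * K == j * K %[mod m])%N = (i == j %[mod m %/ gcdn m K])%N.
Proof.
move=> m_gt1; have order_K : #[(K%:R : 'Z_m)]%g = (m %/ gcdn m K)%N.
  by rewrite -zmodXgE orderXgcd -[(1 : 'Z_m)]/Zp1 order_Zp1 Zp_cast.
by rewrite -(eqr_mulrn order_K) -!mulrnA -eqr_natr_Zp // ![(K * _)%N]mulnC.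
Qed.

Lemma ham_walk_Zp_nat m K (F : nat -> nat) (L : nat -> bool) : (1 < m)%N ->
  (forall t, t.+1 < m -> F t.+1 = F t + K + L t %[mod m])%N ->
  (forall t s, t < m -> s < m -> F t = F s %[mod m] -> t = s)%N ->
  ham_walk (K%:R : 'Z_m) K.+1%:R (fun t => (F t)%:R) L.
Proof.
move=> m_gt1 stepF injF; split=> [t|t s]; rewrite ?inE card_Zmod // => lt_t.
  apply/eqP; rewrite /cay_step; case: (L t) (stepF t lt_t) => step;
  by rewrite -natrD eqr_natr_Zp // step /= ?addn0 ?addn1 ?addnS.
by move=> lt_s /eqP; rewrite eqr_natr_Zp // => /eqP; apply: injF.
Qed.

Section EvenRows.
Local Open Scope nat_scope.
Variables (m K : nat).
Hypotheses (m_gt1 : 1 < m) (K_gt0 : 0 < K).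
Let g := gcdn m K.
Let r := m %/ g.

Let g_dvd_m : g %| m. Proof. exact: dvdn_gcdl. Qed.
Let g_dvd_K : g %| K. Proof. exact: dvdn_gcdr. Qed.
Let m_eq : m = r * g. Proof. by rewrite divnK. Qed.
Let r_gt0 : 0 < r. Proof. by have := ltnW m_gt1; rewrite m_eq muln_gt0 => /andP[]. Qed.
Let g_gt0 : 0 < g. Proof. by have := ltnW m_gt1; rewrite m_eq muln_gt0 => /andP[]. Qed.

Let addn_rK x : x + r * K = x %[mod m].
Proof.
by rewrite /r /g gcdnC [_ * K]mulnC muln_divCA_gcd [m * _]mulnC addnC modnMDl.
Qed.

Let block_lt t : t < m -> t %/ r < g.
Proof. by rewrite ltn_divLR // mulnC -m_eq. Qed.

Let even_coords u u' t s : u < g -> u' < g ->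
  u + t %% r * K = u' + s %% r * K %[mod m] -> u = u' /\ t %% r = s %% r.
Proof.
move=> lt_u lt_u' E.
have modgK x i : (x + i * K) %% g = x %% g.
  by case/dvdnP: g_dvd_K => k ->; rewrite mulnA addnC modnMDl.
have eq_u : u = u'.
  by move: (congr1 (modn^~ g) E); rewrite !modn_dvdm // !modgK !modn_small.
split=> //; move/eqP: E; rewrite eq_u eqn_modDl eqn_modMr_gcd // -/g -/r.
by rewrite !modn_mod => /eqP.
Qed.

Let eq_mod_rK x y : y = x + r * K -> x = y %[mod m].
Proof. by move->; rewrite addn_rK. Qed.

Let mulnK_pred : r * K = r.-1 * K + K.
Proof. by rewrite -{1}(prednK r_gt0) mulSn addnC. Qed.

Let modn_succ x y : x.+1 = y.+1 %[mod m] -> x = y %[mod m].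
Proof. by rewrite -[x.+1]addn1 -[y.+1]addn1 => /eqP; rewrite eqn_modDr => /eqP. Qed.

(* The multiples of [K] form a subgroup of [Z_m] of order [r], whose cosets
   are represented by [0, ..., g - 1].  [F] runs through each coset with
   steps [K] and moves to the next coset with a step [K + 1], since
   [r K = 0 mod m]; [F'] visits the cosets in the opposite order, moving
   between them with steps [K - 1]. *)
Let F t := t %/ r + t %% r * K.
Let F' t := (t %% r * K + (g.-1 - t %/ r)).+1.
Let L t := t %% r == r.-1.

Let even_stepF t : t.+1 < m -> F t.+1 = F t + K + L t %[mod m].
Proof.
move=> lt_t; rewrite /F /L (divnS _ r_gt0) (modnS t r) dvdn_modS //.
case: eqP => [last_t|_] /=; last by rewrite mulSn; congr (_ %% m); lia.
by apply: eq_mod_rK; rewrite last_t mulnK_pred; lia.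
Qed.

Let even_stepF' t : t.+1 < m -> F' t.+1 = F' t + K.-1 + ~~ L t %[mod m].
Proof.
move=> /block_lt; rewrite /F' /L (divnS _ r_gt0) (modnS t r) dvdn_modS //.
case: eqP => [last_t|_] /= lt_q; last by rewrite mulSn; congr (_ %% m); lia.
by apply: eq_mod_rK; rewrite last_t mulnK_pred; lia.
Qed.

Let even_injF t s : t < m -> s < m -> F t = F s %[mod m] -> t = s.
Proof.
move=> lt_t lt_s /(even_coords (block_lt lt_t) (block_lt lt_s))[eq_q eq_i].
by rewrite (divn_eq t r) (divn_eq s r) eq_q eq_i.
Qed.

Let even_injF' t s : t < m -> s < m -> F' t = F' s %[mod m] -> t = s.
Proof.
move=> lt_t lt_s /modn_succ; rewrite ![_ * K + _]addnC.
have lt_u x : g.-1 - x < g by have := g_gt0; lia.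
move=> /(even_coords (lt_u _) (lt_u _))[eq_u eq_i].
have := block_lt lt_t; have := block_lt lt_s => lt_qs lt_qt.
by rewrite (divn_eq t r) (divn_eq s r) eq_i; congr (_ * r + _); lia.
Qed.

Let even_disj t s : t < m -> s < m -> (F t).+1 = F' s %[mod m] -> L t != ~~ L s.
Proof.
move=> lt_t lt_s /modn_succ; rewrite [_ * K + _]addnC.
have lt_u x : g.-1 - x < g by have := g_gt0; lia.
move=> /(even_coords (block_lt lt_t) (lt_u _))[_ eq_i].
by rewrite /L eq_i; case: (s %% r == r.-1).
Qed.

Local Open Scope ring_scope.

Lemma even_row_walks be : (0 < be)%N -> exists F L F' L',
  [/\ ham_walk (K%:R : 'Z_m) K.+1%:R F L, ham_walk (K.-1%:R : 'Z_m) K.-1.+1%:R F' L'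
    & arc_disjoint_walks (fun t => F t + be%:R) L (fun t => F' t + be.-1%:R) L'].
Proof.
move=> be_gt0; exists (fun t => (F t)%:R), L, (fun t => (F' t)%:R), (fun t => ~~ L t).
split; [exact: ham_walk_Zp_nat | exact: ham_walk_Zp_nat |].
move=> t s; rewrite card_Zmod // => lt_t lt_s /eqP.
rewrite -!natrD eqr_natr_Zp // -(prednK be_gt0) addnS -addSn eqn_modDr => /eqP.
by apply: even_disj; apply: ltnW.
Qed.

End EvenRows.

Definition ham_paths_Zk_succ : Prop :=
  forall k a : nat, (0 < k)%N -> (0 < a)%N -> ~~ (k %| a)%N -> ~~ (k %| a.+1)%N ->
    two_arc_disjoint_ham_paths (a%:R : 'Z_k) (a.+1%:R : 'Z_k).

Definition ham_paths_Zk_opp : Prop :=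
  forall k a : nat, (0 < k)%N -> (0 < a)%N -> (a.*2.+1 %| k)%N ->
    ~~ (k %| a)%N -> ~~ (k %| a.+1)%N ->
    two_arc_disjoint_ham_paths (- (a%:R) : 'Z_k) (a.+1%:R : 'Z_k).

Lemma two_arc_disjoint_ham_paths_cycle (G : finZmodType) (s : G) be :
  ham_paths_Zk_opp -> #[s]%g = #|G| -> (be.*2.+1 %| #|G|)%N -> (be.+1 < #|G|)%N ->
  s *+ be != 0 -> two_arc_disjoint_ham_paths (- (s *+ be)) (s *+ be.+1).
Proof.
move=> opp_paths order_s dvd_G lt_be sbe_neq0.
have be_gt0 : (0 < be)%N.
  by move: sbe_neq0; case: be {lt_be dvd_G} => //; rewrite mulr0n eqxx.
have G_gt1 : (1 < #|G|)%N by apply: leq_ltn_trans lt_be.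
have Zpn := Zp_mulrn_nat order_s G_gt1.
rewrite -[s *+ be]Zpn -(Zp_mulrnN order_s G_gt1) -[s *+ be.+1]Zpn.
apply: (two_arc_disjoint_ham_paths_morph (psi := fun j : 'Z_#|G| => s *+ j)).
- exact: Zp_mulrnD.
- exact: Zp_mulrn_inj.
- exact: card_Zmod.
apply: opp_paths => //; first exact: ltnW.
  by rewrite gtnNdvd // ltnW.
by rewrite gtnNdvd.
Qed.

Lemma opp_mulrn_eq (V : zmodType) (s x y : V) k :
  s *+ k + x = 0 -> x + y = s -> x = - (s *+ k) /\ y = s *+ k.+1.
Proof.
move=> sx0 xy; split; first by apply/eqP; rewrite -addr_eq0 addrC sx0.
by rewrite mulrSr -{2}xy addrA sx0 add0r.
Qed.

Lemma odd_cycle_generators (G : finZmodType) (a b : G) n l be :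
  (forall g, exists i j : nat, g = a *+ i + (b - a) *+ j) ->
  n = be.*2.+1 -> a *+ n = (b - a) *+ l ->
  (#[(b - a)%R]%g %| l + be)%N || (#[(b - a)%R]%g %| (l + be).+1)%N ->
  #[(a + b)%R]%g = #|G| /\
  (a = - ((a + b) *+ be) /\ b = (a + b) *+ be.+1 \/
   b = - ((a + b) *+ be) /\ a = (a + b) *+ be.+1).
Proof.
move=> gen n_eq anl dvd.
have sum_a : (a + b) *+ be + a = (b - a) *+ (l + be).
  rewrite mulrnDr -anl n_eq mulrnDl mulrnBl mulrS -addnn mulrnDr.
  rewrite [a + _]addrC -!addrA; congr (_ + _).
  by rewrite addrCA [a *+ be + _]addrC subrK addrC.
have sum_b : (a + b) *+ be + b = (b - a) *+ (l + be).+1.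
  have -> : (a + b) *+ be + b = (a + b) *+ be + a + (b - a).
    by rewrite -addrA [a + (_ - _)]addrC subrK.
  by rewrite sum_a -mulrSr.
have mulrn_order_dvd k : (#[(b - a)%R]%g %| k)%N -> (b - a) *+ k = 0.
  by move=> /dvdnP[q ->]; rewrite -(mulrn_modn (erefl _)) modnMl.
have gens : a = - ((a + b) *+ be) /\ b = (a + b) *+ be.+1 \/
            b = - ((a + b) *+ be) /\ a = (a + b) *+ be.+1.
  case/orP: dvd => /mulrn_order_dvd ba0; [left | right]; apply: opp_mulrn_eq.
  - exact: etrans sum_a ba0.
  - by [].
  - exact: etrans sum_b ba0.
  - exact: addrC.
split=> //; rewrite /order -cardsT; apply: eq_card => g; rewrite inE.
have [a_in b_in] : a \in <[(a + b)%R]>%g /\ b \in <[(a + b)%R]>%g.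
  set s := (a + b)%R in gens *.
  by case: gens => -[-> ->]; split; rewrite ?(groupV, (mem_cycle s)).
have [i [j ->]] := gen g.
by rewrite -!zmodXgE -zmodVgE -zmodMgE groupM ?groupX ?groupM ?groupV.
Qed.

Section Snake.
Variables (G : finZmodType) (a b : G) (n m l : nat).
Hypotheses (n_gt0 : (0 < n)%N) (order_ba : #[b - a]%g = m) (m_gt1 : (1 < m)%N).
Hypotheses (anl : a *+ n = (b - a) *+ l) (card_G : #|G| = (n * m)%N).
Hypothesis gen : forall g, exists i j : nat, g = a *+ i + (b - a) *+ j.
Hypothesis coord_uniq : forall i i' j j', (i < n)%N -> (i' < n)%N ->
  a *+ i + (b - a) *+ j = a *+ i' + (b - a) *+ j' -> i = i'.

(* [P j] tells whether step [j] inside a block is [b] rather than [a]; block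
   [q] starts at [(b - a) *+ F q] and its last step is the arc [L q]. *)
Definition snake (P : pred nat) (F : nat -> 'Z_m) (t : nat) : G :=
  (b - a) *+ F (t %/ n)%N + (b - a) *+ count P (iota 0 (t %% n)) + a *+ (t %% n)%N.

Definition snake_label (P : pred nat) (L : nat -> bool) (t : nat) : bool :=
  if (t %% n == n.-1)%N then L (t %/ n)%N else P (t %% n)%N.

Lemma snake_step P F L t : (t.+1 < #|G|)%N ->
  ham_walk (l + count P (iota 0 n.-1))%:R (l + count P (iota 0 n.-1)).+1%:R F L ->
  snake P F t.+1 = cay_step a b (snake P F t) (snake_label P L t).
Proof.
have stepE x : (if x then b else a) = (b - a) *+ x + a.
  by case: x; rewrite ?mulr0n ?add0r ?subrK.
rewrite card_G /snake /snake_label /cay_step stepE => lt_t [stepF _].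
have ZpD := Zp_mulrnD order_ba m_gt1; have Zpn := Zp_mulrn_nat order_ba m_gt1.
have : (t.+1 %/ n < m)%N by rewrite ltn_divLR // mulnC.
rewrite (divnS _ n_gt0) modnS dvdn_modS //; case: eqP => [last_t|_] lt_q.
  rewrite add1n mulr0n !addr0 stepF ?card_Zmod // /cay_step ZpD last_t -!addrA.
  congr (_ + _); rewrite [a *+ n.-1 + _]addrCA -mulrSr prednK // anl -!mulrnDr.
  by case: (L _); rewrite Zpn; congr (_ *+ _); lia.
by rewrite add0n count_iotaS mulrnDr mulrSr -!addrA [a *+ _ + (_ + _)]addrCA.
Qed.

Lemma snake_coords P F t : snake P F t =
  a *+ (t %% n) + (b - a) *+ (F (t %/ n)%N + count P (iota 0 (t %% n)))%N.
Proof. by rewrite /snake mulrnDr addrC. Qed.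

Lemma snake_eq P P' F F' t s : snake P F t = snake P' F' s ->
  (t %% n = s %% n)%N /\
  (b - a) *+ F (t %/ n)%N + (b - a) *+ count P (iota 0 (t %% n)) =
  (b - a) *+ F' (s %/ n)%N + (b - a) *+ count P' (iota 0 (t %% n)).
Proof.
rewrite !snake_coords => E.
have eq_ts := coord_uniq (ltn_pmod t n_gt0) (ltn_pmod s n_gt0) E.
by split=> //; move: E; rewrite eq_ts => /addrI; rewrite !mulrnDr.
Qed.

Lemma snake_row_lt t : (t < n * m)%N -> (t %/ n < m)%N.
Proof. by rewrite ltn_divLR // mulnC. Qed.

Lemma snake_last_row_lt t : (t.+1 < n * m)%N -> (t %% n = n.-1)%N -> ((t %/ n).+1 < m)%N.
Proof.
move=> /snake_row_lt lt_q last_t.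
by move: lt_q; rewrite (divnS t n_gt0) dvdn_modS // last_t eqxx.
Qed.

Lemma ham_walk_snake P F L :
  ham_walk (l + count P (iota 0 n.-1))%:R (l + count P (iota 0 n.-1)).+1%:R F L ->
  ham_walk a b (snake P F) (snake_label P L).
Proof.
move=> walkF; split=> [t lt_t|t s]; first exact: snake_step.
have [_ injF] := walkF; rewrite !inE card_G => lt_t lt_s /snake_eq[eq_ts].
move=> /addIr /(Zp_mulrn_inj order_ba m_gt1) /injF eq_q.
rewrite (divn_eq t n) (divn_eq s n) eq_ts eq_q // !inE card_Zmod // snake_row_lt //.
Qed.

(* Arcs inside blocks are told apart by the complementary patterns; the arcs
   ending blocks by the disjointness of the shifted row walks. *)
Lemma arc_disjoint_snake P F L F' L' :
  arc_disjoint_walks (fun q => F q + (count P (iota 0 n.-1))%:R) L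
                     (fun q => F' q + (count (predC P) (iota 0 n.-1))%:R) L' ->
  arc_disjoint_walks (snake P F) (snake_label P L)
                     (snake (predC P) F') (snake_label (predC P) L').
Proof.
move=> disj t s; rewrite card_G => lt_t lt_s /snake_eq[eq_ts].
rewrite /snake_label -eq_ts.
case: (t %% n =P n.-1)%N => [last_t|_]; last by rewrite /= => _; case: (P _).
have ZpD := Zp_mulrnD order_ba m_gt1; have Zpn := Zp_mulrn_nat order_ba m_gt1.
rewrite last_t -[(b - a) *+ count P _]Zpn -[(b - a) *+ count _ _]Zpn -!ZpD.
move=> /(Zp_mulrn_inj order_ba m_gt1).
by apply: disj; rewrite card_Zmod // snake_last_row_lt // -?eq_ts.
Qed.

Lemma two_arc_disjoint_ham_paths_rows be F L F' L' : (be < n)%N ->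
  ham_walk ((l + be)%:R : 'Z_m) (l + be).+1%:R F L ->
  ham_walk ((l + (n.-1 - be))%:R : 'Z_m) (l + (n.-1 - be)).+1%:R F' L' ->
  arc_disjoint_walks (fun q => F q + be%:R) L (fun q => F' q + (n.-1 - be)%:R) L' ->
  two_arc_disjoint_ham_paths a b.
Proof.
move=> lt_be walkF walkF' disj.
have cnt : count (gtn be) (iota 0 n.-1) = be by rewrite count_gtn_iota; lia.
have cntC : count (predC (gtn be)) (iota 0 n.-1) = (n.-1 - be)%N.
  by rewrite -[n.-1 in RHS](size_iota 0) -(count_predC (gtn be)) cnt addKn.
apply/two_arc_disjoint_ham_pathsP.
exists (snake (gtn be) F), (snake_label (gtn be) L).
exists (snake (predC (gtn be)) F'), (snake_label (predC (gtn be)) L'); split.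
- by apply: ham_walk_snake; rewrite cnt.
- by apply: ham_walk_snake; rewrite cntC.
by apply: arc_disjoint_snake; rewrite cnt cntC.
Qed.

Lemma two_arc_disjoint_ham_paths_even be : n = be.*2 -> two_arc_disjoint_ham_paths a b.
Proof.
move=> n_eq; have be_gt0 : (0 < be)%N by lia.
have [F [L [F' [L' [walkF walkF' disj]]]]] :=
  even_row_walks m_gt1 (ltn_addl l be_gt0) be_gt0.
have n1_be : (n.-1 - be = be.-1)%N by lia.
have K'_eq : (l + be.-1 = (l + be).-1)%N by lia.
by apply: (@two_arc_disjoint_ham_paths_rows be F L F' L'); rewrite ?n1_be ?K'_eq //; lia.
Qed.

Lemma two_arc_disjoint_ham_paths_odd be : n = be.*2.+1 ->
  two_arc_disjoint_ham_paths ((l + be)%:R : 'Z_m) (l + be).+1%:R ->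
  two_arc_disjoint_ham_paths a b.
Proof.
move=> n_eq /two_arc_disjoint_ham_pathsP[F [L [F' [L' [walkF walkF' disj]]]]].
have n1_be : (n.-1 - be = be)%N by lia.
apply: (@two_arc_disjoint_ham_paths_rows be F L F' L'); rewrite ?n1_be //; first lia.
exact: arc_disjoint_walks_addr.
Qed.

Lemma two_arc_disjoint_ham_paths_odd_cycle be :
  ham_paths_Zk_opp -> a != 0 -> b != 0 -> n = be.*2.+1 ->
  (m %| l + be)%N || (m %| (l + be).+1)%N -> two_arc_disjoint_ham_paths a b.
Proof.
move=> opp_paths a_neq0 b_neq0 n_eq; rewrite -order_ba => dvd.
have [order_s gens] := odd_cycle_generators gen n_eq anl dvd.
have dvd_G : (be.*2.+1 %| #|G|)%N by rewrite card_G -n_eq dvdn_mulr.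
have lt_be : (be.+1 < #|G|)%N by rewrite card_G; nia.
have := two_arc_disjoint_ham_paths_cycle opp_paths order_s dvd_G lt_be.
case: gens => -[ea eb]; [|move=> paths; apply: two_arc_disjoint_ham_pathsC; move: paths];
  by rewrite -ea -eb; apply; rewrite -oppr_eq0 -ea.
Qed.

Lemma two_arc_disjoint_ham_paths_of_Zk :
  ham_paths_Zk_succ -> ham_paths_Zk_opp -> a != 0 -> b != 0 ->
  two_arc_disjoint_ham_paths a b.
Proof.
move=> succ_paths opp_paths a_neq0 b_neq0.
have := odd_double_half n; set be := n./2.
case: (odd n) => /esym n_eq; last exact: (two_arc_disjoint_ham_paths_even n_eq).
have [dvd|] := boolP ((m %| l + be) || (m %| (l + be).+1))%N.
  exact: two_arc_disjoint_ham_paths_odd_cycle dvd.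
rewrite negb_or => /andP[ndvd ndvdS].
have K_gt0 : (0 < l + be)%N by move: ndvd; apply: contraR; rewrite -eqn0Ngt => /eqP->.
exact: two_arc_disjoint_ham_paths_odd n_eq (succ_paths _ _ (ltnW m_gt1) K_gt0 ndvd ndvdS).
Qed.

End Snake.

Theorem mainTheorem11 :
  (forall k a : nat, (0 < k)%N -> (0 < a)%N ->
     ~~ (k %| a)%N -> ~~ (k %| a.+1)%N ->
     two_arc_disjoint_ham_paths (a%:R : 'Z_k) (a.+1%:R : 'Z_k)) ->
  (forall k a : nat, (0 < k)%N -> (0 < a)%N -> (a.*2.+1 %| k)%N ->
     ~~ (k %| a)%N -> ~~ (k %| a.+1)%N ->
     two_arc_disjoint_ham_paths (- (a%:R) : 'Z_k) (a.+1%:R : 'Z_k)) ->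
  forall (G : finZmodType) (a b : G),
    generates2 a b -> a != b -> a != 0 -> b != 0 ->
    two_arc_disjoint_ham_paths a b.
Proof.
move=> succ_paths opp_paths G a b /generates2_mulrn gen neq_ab a_neq0 b_neq0.
have [n [l [n_gt0 anl card_G coord_uniq]]] := cycle_coordinates gen.
have m_gt1 : (1 < #[(b - a)%R]%g)%N.
  by rewrite ltn_neqAle order_gt0 andbT eq_sym order_eq1 subr_eq0 eq_sym.
exact: (two_arc_disjoint_ham_paths_of_Zk n_gt0 (erefl _) m_gt1 anl card_G gen coord_uniq).
Qed.
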